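(* If $F_1$ and $F_2$ are forests with $X_{F_1}=X_{F_2}$, then $F_1$ and $F_2$ have the same number of leaves. That is, the number of leaves of a forest is determined by its chromatic symmetric function.
   Context: For a graph $G=(V,E)$ with $V=\{v_1,\dots,v_n\}$, a proper coloring is a map $\kappa:V\to\mathbb{N}$ with $\kappa(u)\ne\kappa(v)$ whenever $(u,v)\in E$. The chromatic symmetric function is $X_G=\sum_\kappa x_{\kappa(v_1)}\cdots x_{\kappa(v_n)}$, summed over proper colorings. A leaf is a vertex of degree exactly $1$. *)

From mathcomp Require Import all_boot.
Set Implicit Arguments. Unset Strict Implicit. Unset Printing Implicit Defensive.

Definition simple_graph (T : finType) (e : rel T) : Prop :=
  symmetric e /\ irreflexive e.

(* A forest: a simple graph with no cycle, i.e. every closed walk through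
   pairwise distinct vertices has at most 2 vertices (a "2-cycle" [x; y] is
   just a single edge traversed back and forth). *)
Definition forest (T : finType) (e : rel T) : Prop :=
  simple_graph e /\ forall c : seq T, uniq c -> cycle e c -> size c <= 2.

Definition degree (T : finType) (e : rel T) (v : T) : nat := #|[set u | e v u]|.
Definition leaves (T : finType) (e : rel T) : {set T} :=
  [set v | degree e v == 1].

Definition proper_coloring (T : finType) (e : rel T) (k : nat)
  (f : {ffun T -> 'I_k}) : bool :=
  [forall u, forall v, e u v ==> (f u != f v)].

(* Coefficient of the monomial x_0^(m 0) ... x_(k-1)^(m (k-1)) in the
   chromatic symmetric function X_G: the number of proper colourings whose
   colour class of i has size m i for every i.  (Any colouring with this
   content only uses colours < k, so restricting to 'I_k loses nothing.) *)
Definition csf_coef (T : finType) (e : rel T) (k : nat) (m : 'I_k -> nat) : nat :=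
  #|[set f : {ffun T -> 'I_k} | proper_coloring e f &
      [forall i, #|[set v | f v == i]| == m i]]|.

Definition same_csf (T1 T2 : finType) (e1 : rel T1) (e2 : rel T2) : Prop :=
  forall (k : nat) (m : 'I_k -> nat), csf_coef e1 m = csf_coef e2 m.

(* For a forest with n vertices and N edges, deleting edges one at a time
   gives the chromatic polynomial P(k) = k^(n-N) (k-1)^N.  Both P and the
   number of proper (m+2)-colourings using colour 0 exactly once are sums of
   coefficients of X_G.  Fixing the vertex v coloured 0, the latter count is
   the number of (m+1)-colourings of the forest with v isolated, so it equals
   (m+1)^(n-N-1) Q(m+1) where Q(x) = \sum_v x^(deg v) (x-1)^(N - deg v).
   Hence X_G determines n, N and the polynomial Q; Q(0) counts the isolated
   vertices and then Q'(0) counts the leaves. *)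

From mathcomp Require Import all_boot all_algebra perm.
Set Implicit Arguments. Unset Strict Implicit. Unset Printing Implicit Defensive.

Lemma card_fibers (T J : finType) (A : {set T}) (F : T -> J) :
  #|A| = \sum_(j : J) #|[set x in A | F x == j]|.
Proof.
rewrite -sum1_card (partition_big F predT) //=.
apply: eq_bigr => j _; rewrite -sum1_card; apply: eq_bigl => x.
by rewrite !inE.
Qed.

Lemma card_in_bij (aT rT : finType) (f : aT -> rT) (g : rT -> aT)
    (A : {set aT}) (B : {set rT}) :
  {in A, cancel f g} -> {in B, cancel g f} ->
  {in A, forall x, f x \in B} -> {in B, forall y, g y \in A} -> #|A| = #|B|.
Proof.
move=> fK gK fAB gBA; rewrite -(card_in_imset (can_in_inj fK)); apply: eq_card => y.
apply/imsetP/idP => [[x xA ->]|yB]; first exact: fAB.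
by exists (g y); rewrite ?gK ?gBA.
Qed.

Section Colorings.
Variables (T : finType) (e : rel T).

Lemma proper_coloringP k (f : {ffun T -> 'I_k}) :
  reflect (forall x y, e x y -> f x != f y) (proper_coloring e f).
Proof.
apply: (iffP forallP) => [h x y exy | h x]; first exact: implyP (forallP (h x) y) exy.
by apply/forallP => y; apply/implyP; apply: h.
Qed.

Definition nproper k := #|[set f : {ffun T -> 'I_k} | proper_coloring e f]|.

Definition arcs := [set p : T * T | e p.1 p.2].
Definition nedges := #|arcs|./2.

Lemma nproper_arcs0 k : arcs = set0 -> nproper k = k ^ #|T|.
Proof.
move=> no_arcs; rewrite -[k in RHS]card_ord -card_ffun -cardsT; apply: eq_card => f.
rewrite !inE; apply/proper_coloringP => x y exy.
by have : (x, y) \in arcs; [rewrite inE | rewrite no_arcs inE].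
Qed.

Definition recolor_component u k (a b : 'I_k) (f : {ffun T -> 'I_k}) :=
  [ffun x => if connect e u x then tperm a b (f x) else f x].

Lemma recolor_componentK u k (a b : 'I_k) : involutive (recolor_component u a b).
Proof.
by move=> f; apply/ffunP => x; rewrite !ffunE; case: (connect e u x); rewrite ?tpermK.
Qed.

Hypothesis e_sym : symmetric e.

Lemma proper_recolor_component u k (a b : 'I_k) f :
  proper_coloring e f -> proper_coloring e (recolor_component u a b f).
Proof.
move=> /proper_coloringP f_pr; apply/proper_coloringP => x y exy; rewrite !ffunE.
have -> : connect e u y = connect e u x.
  apply/idP/idP => cu; apply: connect_trans cu (connect1 _); by rewrite // e_sym.
by case: ifP => _; rewrite ?(inj_eq perm_inj) f_pr.
Qed.

Lemma card_proper_swap u k (a b : 'I_k) (P : pred {ffun T -> 'I_k}) :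
  (forall f, P (recolor_component u a b f) = P f) ->
  #|[set f | proper_coloring e f & (f u == a) && P f]| =
  #|[set f | proper_coloring e f & (f u == b) && P f]|.
Proof.
move=> P_inv; have swapK := recolor_componentK u a b.
apply: (card_in_bij (in1W swapK) (in1W swapK)) => f; rewrite !inE => /and3P [f_pr fu Pf];
  by rewrite proper_recolor_component // P_inv Pf ffunE connect0 (eqP fu) ?tpermL ?tpermR eqxx.
Qed.

Lemma nproper_fiber u k a :
  nproper k = k * #|[set f : {ffun T -> 'I_k} | proper_coloring e f & f u == a]|.
Proof.
rewrite /nproper (card_fibers _ (fun f : {ffun T -> 'I_k} => f u)).
transitivity (\sum_(c : 'I_k) #|[set f : {ffun T -> 'I_k} | proper_coloring e f & f u == a]|);
  last by rewrite sum_nat_const card_ord.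
apply: eq_bigr => c _.
apply: etrans (etrans _ (@card_proper_swap u k c a predT (fun _ => erefl))) _;
  by apply: eq_card => f; rewrite !inE andbT.
Qed.

Lemma nproper_same_color u v k : ~~ connect e u v ->
  nproper k = k * #|[set f : {ffun T -> 'I_k} | proper_coloring e f & f u == f v]|.
Proof.
move=> nc_uv; rewrite /nproper [LHS](card_fibers _ (fun f : {ffun T -> 'I_k} => f v)).
rewrite [X in _ * X](card_fibers _ (fun f : {ffun T -> 'I_k} => f v)).
rewrite big_distrr /=; apply: eq_bigr => c _.
transitivity (\sum_(a : 'I_k)
    #|[set f : {ffun T -> 'I_k} | proper_coloring e f & (f u == c) && (f v == c)]|).
  rewrite [LHS](card_fibers _ (fun f : {ffun T -> 'I_k} => f u)); apply: eq_bigr => a _.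
  have fv_inv f : (recolor_component u a c f v == c) = (f v == c).
    by rewrite ffunE (negbTE nc_uv).
  apply: etrans (etrans _ (card_proper_swap fv_inv)) _;
    by apply: eq_card => f; rewrite !inE // andbAC andbA.
rewrite sum_nat_const card_ord; congr (_ * _); apply: eq_card => f; rewrite !inE.
by case: (eqVneq (f v) c) => [->|]; rewrite ?andbT ?andbF.
Qed.

End Colorings.

Definition deledge (T : finType) (e : rel T) (u v : T) : rel T :=
  fun x y => e x y && ~~ ((x == u) && (y == v) || (x == v) && (y == u)).

Definition isolate (T : finType) (e : rel T) (v : T) : rel T :=
  fun x y => e x y && (x != v) && (y != v).

Section Subgraphs.
Variables (T : finType) (e : rel T).

Lemma deledge_sub u v : subrel (deledge e u v) e.
Proof. by move=> x y /andP []. Qed.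

Lemma isolate_sub v : subrel (isolate e v) e.
Proof. by move=> x y /andP [/andP []]. Qed.

Lemma sub_forest (e' : rel T) : forest e -> symmetric e' -> subrel e' e -> forest e'.
Proof.
move=> [[_ e_irr] e_acyc] e'_sym e'e; split; first split=> // x.
  by apply/negP => /e'e; rewrite e_irr.
by move=> c c_uniq /(sub_cycle e'e); apply: e_acyc.
Qed.

Lemma proper_deledge u v k (f : {ffun T -> 'I_k}) : e u v ->
  proper_coloring e f = proper_coloring (deledge e u v) f && (f u != f v).
Proof.
move=> euv; apply/proper_coloringP/andP => [f_pr | [/proper_coloringP f_pr fuv] x y exy].
  by split; [apply/proper_coloringP => x y /deledge_sub; apply: f_pr | apply: f_pr].
case: (boolP (deledge e u v x y)) => [|]; first exact: f_pr.
rewrite /deledge exy negbK => /orP [] /andP [/eqP -> /eqP ->] //.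
by rewrite eq_sym.
Qed.

Hypothesis e_sym : symmetric e.

Lemma deledge_sym u v : symmetric (deledge e u v).
Proof.
move=> x y; rewrite /deledge e_sym orbC.
by congr (_ && ~~ (_ || _)); apply: andbC.
Qed.

Lemma isolate_sym v : symmetric (isolate e v).
Proof. by move=> x y; rewrite /isolate e_sym andbAC. Qed.

Hypothesis e_irr : irreflexive e.

Lemma card_arcs_deledge u v : e u v -> #|arcs e| = (#|arcs (deledge e u v)|).+2.
Proof.
move=> euv; have uv : u != v by apply: contraTneq euv => ->; rewrite e_irr.
rewrite (cardsD1 (u, v)) (cardsD1 (v, u) (arcs e :\ (u, v))).
rewrite !inE /= euv e_sym euv xpair_eqE (negbTE uv) andbF /= !add1n.
congr (_.+2); apply: eq_card => -[x y]; rewrite !inE /= /deledge !xpair_eqE.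
by case: (e x y); case: (x == v); case: (y == u); case: (x == u); case: (y == v).
Qed.

Lemma nedges_deledge u v : e u v -> nedges e = (nedges (deledge e u v)).+1.
Proof. by move=> euv; rewrite /nedges (card_arcs_deledge euv). Qed.

Lemma card_arcs_isolate v : #|arcs e| = #|arcs (isolate e v)| + (degree e v).*2.
Proof.
rewrite -(cardsID [set p : T * T | p.1 == v]).
rewrite -(cardsID [set p : T * T | p.2 == v] (arcs e :\: _)).
have -> : arcs e :\: [set p : T * T | p.1 == v] :\: [set p | p.2 == v] = arcs (isolate e v).
  apply/setP => -[x y]; rewrite !inE /= /isolate.
  by case: (e x y); case: (x == v); case: (y == v).
have -> : arcs e :&: [set p : T * T | p.1 == v] = [set (v, u) | u in [set u | e v u]].
  apply/setP => -[x y]; rewrite !inE /=; apply/andP/imsetP => [[exy /eqP xv]|[u]].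
    by exists y; [rewrite inE -xv | rewrite xv].
  by rewrite inE => evu [-> ->]; rewrite evu eqxx.
have -> : (arcs e :\: [set p : T * T | p.1 == v]) :&: [set p : T * T | p.2 == v]
    = [set (u, v) | u in [set u | e v u]].
  apply/setP => -[x y]; rewrite !inE /=; apply/andP/imsetP => [[/andP [xv exy] /eqP yv]|[u]].
    by exists x; [rewrite inE e_sym -yv | rewrite yv].
  rewrite inE => evu [-> ->]; rewrite e_sym evu andbT; split=> //.
  by apply: contraTneq evu => ->; rewrite e_irr.
rewrite !card_imset; first by rewrite /degree -addnn addnA addnC.
  by move=> a b [].
by move=> a b [].
Qed.

Lemma nedges_isolate v : nedges e = nedges (isolate e v) + degree e v.
Proof. by rewrite /nedges (card_arcs_isolate v) halfD odd_double andbF doubleK. Qed.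

Lemma degree_le_nedges v : degree e v <= nedges e.
Proof. by rewrite (nedges_isolate v) leq_addl. Qed.

End Subgraphs.

Section Forests.
Variables (T : finType) (e : rel T).
Hypothesis e_forest : forest e.

Lemma forest_deledge_disconnect u v : e u v -> ~~ connect (deledge e u v) u v.
Proof.
have [[e_sym e_irr] e_acyc] := e_forest.
move=> euv; apply/negP => /connectP [p p_path p_last].
case: (shortenP p_path) p_last => c c_path c_uniq _ c_last.
have c_cycle : cycle e (u :: c).
  by rewrite /= rcons_path (sub_path (@deledge_sub T e u v) c_path) -c_last e_sym euv.
have := e_acyc _ c_uniq c_cycle; case: c c_path {c_uniq c_cycle} c_last => [|w [|w' c]] //=.
  by move=> _ uv; rewrite uv e_irr in euv.
by move=> /andP [+ _] wv; rewrite /deledge -wv !eqxx andbF.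
Qed.

Lemma nproper_deledge u v k : e u v ->
  k * nproper e k = (k - 1) * nproper (deledge e u v) k.
Proof.
have [[e_sym e_irr] _] := e_forest.
move=> euv; set S := #|[set f : {ffun T -> 'I_k} | proper_coloring (deledge e u v) f & f u == f v]|.
have kS : k * S = nproper (deledge e u v) k.
  by rewrite (nproper_same_color (deledge_sym e_sym u v) k (forest_deledge_disconnect euv)).
have split_uv : nproper (deledge e u v) k = nproper e k + S.
  rewrite /nproper (card_fibers _ (fun f : {ffun T -> 'I_k} => f u == f v)) big_bool addnC.
  by congr (_ + _); apply: eq_card => f; rewrite !inE ?eqb_id ?eqbF_neg ?(proper_deledge _ euv).
by rewrite mulnBl mul1n {1}split_uv mulnDr kS addnK.
Qed.

End Forests.

Theorem forest_nproper (T : finType) (e : rel T) k : forest e ->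
  nproper e k * k ^ nedges e = k ^ #|T| * (k - 1) ^ nedges e.
Proof.
have [n] := ubnP (nedges e); elim: n e => // n IHn e lt_e_n e_forest.
have [[e_sym e_irr] _] := e_forest.
have [no_arcs | [[u v]]] := set_0Vmem (arcs e).
  by rewrite /nedges no_arcs cards0 nproper_arcs0 // !muln1.
rewrite inE /= => euv; have e'_forest := sub_forest e_forest
  (deledge_sym e_sym u v) (@deledge_sub T e u v).
rewrite (nedges_deledge e_sym e_irr euv) in lt_e_n *.
rewrite !expnS mulnCA mulnA (nproper_deledge e_forest k euv) -mulnA IHn //.
by rewrite mulnCA mulnA.
Qed.

Section ColorZeroAtVertex.
Variables (T : finType) (e : rel T).
Hypotheses (e_sym : symmetric e) (e_irr : irreflexive e).

Definition nproper_zero_at v m :=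
  #|[set f : {ffun T -> 'I_m.+2} | proper_coloring e f & [set x | f x == ord0] == [set v]]|.

(* Shifting colours up by one, with [v] sent to [0], identifies the two sides. *)
Lemma nproper_isolate v m : nproper (isolate e v) m.+1 = m.+1 * nproper_zero_at v m.
Proof.
rewrite (nproper_fiber (isolate_sym e_sym v) v ord0); congr (_ * _).
pose raise (h : {ffun T -> 'I_m.+1}) : {ffun T -> 'I_m.+2} :=
  [ffun x => if x == v then ord0 else lift ord0 (h x)].
pose lower (f : {ffun T -> 'I_m.+2}) : {ffun T -> 'I_m.+1} :=
  [ffun x => odflt ord0 (unlift ord0 (f x))].
have lift0_unlift (c : 'I_m.+2) : c != ord0 -> lift ord0 (odflt ord0 (unlift ord0 c)) = c.
  by rewrite eq_sym => /unlift_some [j -> ->].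
have zerosE (f : {ffun T -> 'I_m.+2}) x : [set x | f x == ord0] = [set v] -> (f x == ord0) = (x == v).
  by move=> zeros; rewrite -[x == v]in_set1 -zeros inE.
apply: (@card_in_bij _ _ raise lower) => [h|f|h|f]; rewrite !inE.
- move=> /andP [_ /eqP hv]; apply/ffunP => x; rewrite !ffunE.
  by case: eqP => [->|_]; rewrite ?unlift_none ?hv ?liftK.
- move=> /andP [_ /eqP /zerosE fx0]; apply/ffunP => x; rewrite !ffunE.
  by case: (eqVneq x v) => [->|xv]; [apply/esym/eqP; rewrite fx0 | rewrite lift0_unlift // fx0].
- move=> /andP [/proper_coloringP h_pr _]; apply/andP; split.
    apply/proper_coloringP => x y exy; rewrite !ffunE.
    case: (eqVneq x v) => [xv|xv]; case: (eqVneq y v) => [yv|yv].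
    + by rewrite xv yv e_irr in exy.
    + by rewrite eq_liftF.
    + by rewrite lift_eqF.
    + by rewrite (inj_eq lift_inj) h_pr // /isolate exy xv yv.
  apply/eqP/setP => x; rewrite !inE /raise ffunE.
  by case: (x == v); rewrite ?eqxx ?lift_eqF.
move=> /andP [/proper_coloringP f_pr /eqP /zerosE fx0]; apply/andP; split.
  apply/proper_coloringP => x y /andP [/andP [exy xv] yv].
  apply: contra (f_pr x y exy); rewrite !ffunE => /eqP lxy.
  by rewrite -(lift0_unlift (f x)) ?fx0 // -(lift0_unlift (f y)) ?fx0 // lxy.
by rewrite ffunE (eqP (_ : f v == ord0)) ?unlift_none ?fx0.
Qed.

End ColorZeroAtVertex.

Lemma forest_nproper_zero_at (T : finType) (e : rel T) v m : forest e ->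
  nproper_zero_at e v m * m.+1 ^ (nedges e - degree e v).+1 =
  m.+1 ^ #|T| * m ^ (nedges e - degree e v).
Proof.
move=> e_forest; have [[e_sym e_irr] _] := e_forest.
have ev_forest := sub_forest e_forest (isolate_sym e_sym v) (@isolate_sub T e v).
rewrite (nedges_isolate e_sym e_irr v) addnK expnS mulnA (mulnC _ m.+1).
by rewrite -nproper_isolate // forest_nproper // subn1.
Qed.

Definition class_sizes (T : finType) k (f : {ffun T -> 'I_k}) : {ffun 'I_k -> nat} :=
  [ffun i => #|[set v | f v == i]|].

Definition ncolorings_with (T : finType) (e : rel T) k (Q : pred {ffun 'I_k -> nat}) :=
  #|[set f : {ffun T -> 'I_k} | proper_coloring e f & Q (class_sizes f)]|.

Lemma ncolorings_with_csf (T : finType) (e : rel T) k (Q : pred {ffun 'I_k -> nat}) n :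
  #|T| <= n ->
  ncolorings_with e Q = \sum_(m : {ffun 'I_k -> 'I_n.+1})
     (if Q [ffun i => val (m i)] then csf_coef e (fun i => val (m i)) else 0).
Proof.
move=> Tn; pose trunc (c : {ffun 'I_k -> nat}) := [ffun i => inord (c i) : 'I_n.+1].
rewrite /ncolorings_with (card_fibers _ (fun f => trunc (class_sizes f))).
apply: eq_bigr => m _.
have truncE (f : {ffun T -> 'I_k}) :
    (trunc (class_sizes f) == m) = (class_sizes f == [ffun i => val (m i)]).
  apply/eqP/eqP => [<-|->]; apply/ffunP => i; rewrite !ffunE ?inord_val //=.
  by rewrite inordK // ltnS (leq_trans (max_card _) Tn).
case: ifP => Qm.
  apply: eq_card => f; rewrite !inE truncE; case: (proper_coloring e f) => //=.
  apply/andP/forallP => [[_ /eqP /ffunP sizes] i | sizes]; first by move: (sizes i); rewrite !ffunE => ->.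
  have /eqP sizesE : class_sizes f == [ffun i => val (m i)].
    by apply/eqP/ffunP => i; rewrite !ffunE; apply/eqP.
  by rewrite sizesE Qm.
apply/eqP; rewrite cards_eq0; apply/eqP/setP => f; rewrite !inE truncE.
by apply/negP => /andP [/andP [_ Qf] /eqP sizesE]; rewrite sizesE Qm in Qf.
Qed.

Lemma same_csf_ncolorings_with (T1 T2 : finType) (e1 : rel T1) (e2 : rel T2) k
    (Q : pred {ffun 'I_k -> nat}) :
  same_csf e1 e2 -> ncolorings_with e1 Q = ncolorings_with e2 Q.
Proof.
move=> same; rewrite (ncolorings_with_csf e1 Q (leq_addr #|T2| #|T1|)).
rewrite (ncolorings_with_csf e2 Q (leq_addl #|T1| #|T2|)).
by apply: eq_bigr => m _; rewrite same.
Qed.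

Lemma csf_coef_ones_gt0 (T : finType) (e : rel T) :
  irreflexive e -> 0 < csf_coef e (fun _ : 'I_#|T| => 1).
Proof.
move=> e_irr; rewrite card_gt0; apply/set0Pn; exists [ffun v => enum_rank v].
rewrite inE; apply/andP; split.
  apply/proper_coloringP => x y exy; rewrite !ffunE (inj_eq enum_rank_inj).
  by apply: contraTneq exy => ->; rewrite e_irr.
apply/forallP => i; rewrite -(card1 (enum_val i)); apply/eqP; apply: eq_card => x.
by rewrite !inE ffunE -(can_eq enum_rankK) enum_valK.
Qed.

Lemma csf_coef_ones_card (T : finType) (e : rel T) k :
  0 < csf_coef e (fun _ : 'I_k => 1) -> #|T| = k.
Proof.
rewrite card_gt0 => /set0Pn [f]; rewrite inE => /andP [_ /forallP sizes].
rewrite -cardsT (card_fibers _ f) (eq_bigr (fun _ => 1)) ?sum1_card ?card_ord // => i _.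
by rewrite -(eqP (sizes i)); apply: eq_card => x; rewrite !inE.
Qed.

Lemma same_csf_card (T1 T2 : finType) (e1 : rel T1) (e2 : rel T2) :
  irreflexive e1 -> same_csf e1 e2 -> #|T1| = #|T2|.
Proof.
by move=> e1_irr same; have := csf_coef_ones_gt0 e1_irr; rewrite same => /csf_coef_ones_card.
Qed.

Lemma card_set1_eq (T : finType) (A : {set T}) : #|[set v | A == [set v]]| = (#|A| == 1).
Proof.
case: cards1P => [[x ->]|A_not1].
  by rewrite [RHS]/= -(cards1 x); apply: eq_card => v; rewrite !inE eqEcard sub1set !inE !cards1 andbT eq_sym.
by apply/eqP; rewrite cards_eq0; apply/eqP/setP => v; rewrite !inE; apply/eqP => Av; apply: A_not1; exists v.
Qed.

Lemma ncolorings_zero_once (T : finType) (e : rel T) m :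
  ncolorings_with e (fun c : {ffun 'I_m.+2 -> nat} => c ord0 == 1) =
  \sum_(v : T) nproper_zero_at e v m.
Proof.
rewrite /ncolorings_with /nproper_zero_at -sum1_card big_mkcond /=.
under [RHS]eq_bigr do rewrite -sum1_card big_mkcond /=.
rewrite exchange_big /=; apply: eq_bigr => f _; rewrite !inE /class_sizes ffunE.
under [RHS]eq_bigr do rewrite inE.
case: (proper_coloring e f) => /=; last by rewrite big1.
rewrite -[LHS]/(nat_of_bool (_ == 1)) -card_set1_eq -sum1_card big_mkcond.
by apply: eq_bigr => v _; rewrite inE.
Qed.

Lemma forest_ncolorings_zero_once (T : finType) (e : rel T) m : forest e ->
  ncolorings_with e (fun c : {ffun 'I_m.+2 -> nat} => c ord0 == 1) * m.+1 ^ (nedges e).+1 =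
  m.+1 ^ #|T| * \sum_(v : T) m.+1 ^ degree e v * m ^ (nedges e - degree e v).
Proof.
move=> e_forest; have [[e_sym e_irr] _] := e_forest.
rewrite ncolorings_zero_once big_distrl big_distrr /=; apply: eq_bigr => v _.
rewrite -(subnK (degree_le_nedges e_sym e_irr v)) -addSn expnD mulnA.
by rewrite forest_nproper_zero_at // -mulnA [_ * m.+1 ^ _]mulnC subnK ?degree_le_nedges.
Qed.

Section DegreePolynomial.
Import GRing.Theory.
Local Open Scope ring_scope.

Definition degree_poly (T : finType) (d : T -> nat) N : {poly int} :=
  \sum_(v : T) 'X^(d v) * ('X - 1) ^+ (N - d v).

Variables (T : finType) (d : T -> nat) (N : nat).

Lemma horner_degree_poly k : (0 < k)%N ->
  (degree_poly d N).[k%:R] = (\sum_(v : T) k ^ d v * (k - 1) ^ (N - d v))%:R.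
Proof.
move=> k_gt0; rewrite horner_sum natr_sum; apply: eq_bigr => v _.
by rewrite hornerM hornerXn horner_exp hornerXsubC natrM !natrX natrB.
Qed.

Lemma sum_indicator (P : pred T) (c : int) :
  \sum_(v : T) (P v)%:R * c = #|[set v | P v]|%:R * c.
Proof.
rewrite -mulr_suml -natr_sum -sum1_card; congr (_%:R * _).
by rewrite [RHS]big_mkcond; apply: eq_bigr => v _; rewrite inE; case: (P v).
Qed.

Lemma degree_poly_at0 : (degree_poly d N).[0] = #|[set v | d v == 0%N]|%:R * (-1) ^+ N.
Proof.
rewrite horner_sum -sum_indicator; apply: eq_bigr => v _.
rewrite hornerM hornerXn horner_exp hornerXsubC expr0n sub0r.
by case: (d v) => [|n] /=; rewrite ?subn0 ?mul1r ?mul0r.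
Qed.

Lemma deriv_degree_poly_at0 : (forall v, d v <= N)%N ->
  ((degree_poly d N)^`()).[0] =
  (#|[set v | d v == 1%N]|%:R + #|[set v | d v == 0%N]|%:R * N%:R) * (-1) ^+ N.-1.
Proof.
move=> d_le; rewrite mulrDl -mulrA -!sum_indicator -big_split raddf_sum horner_sum /=.
apply: eq_bigr => v _.
rewrite derivM derivXn deriv_exp derivXsubC mul1r hornerD !hornerM hornerMn hornerXn.
rewrite hornerMn hornerXn !horner_exp hornerXsubC sub0r expr0n.
case: (d v) (d_le v) => [|[|n]] _ /=.
- by rewrite mulr0n expr0 subn0 !mul0r !mul1r !add0r mulr_natl.
- by rewrite mulr1n expr1 subn1 !mul1r !mul0r !addr0.
- by rewrite mul0rn exprS !mul0r addr0.
Qed.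

End DegreePolynomial.

Section DegreePolynomialComparison.
Import GRing.Theory Num.Theory.
Local Open Scope ring_scope.

Variables (T1 T2 : finType) (d1 : T1 -> nat) (d2 : T2 -> nat) (N : nat).

Lemma degree_poly_eq :
  (forall k, (0 < k)%N -> \sum_v k ^ d1 v * (k - 1) ^ (N - d1 v) =
                        \sum_v k ^ d2 v * (k - 1) ^ (N - d2 v))%N ->
  degree_poly d1 N = degree_poly d2 N.
Proof.
move=> eq_at; apply/eqP; rewrite -subr_eq0; apply/eqP.
set q := _ - _; apply: (@roots_geq_poly_eq0 _ q [seq i.+1%:R | i <- iota 0 (size q)]).
- apply/allP => _ /mapP [i _ ->].
  by rewrite rootE hornerD hornerN !horner_degree_poly // eq_at // subrr.
- by rewrite map_inj_uniq ?iota_uniq // => a b /eqP; rewrite eqr_nat => /eqP [].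
by rewrite size_map size_iota.
Qed.

Lemma degree_poly_card1 :
  (forall v, d1 v <= N)%N -> (forall v, d2 v <= N)%N ->
  degree_poly d1 N = degree_poly d2 N ->
  #|[set v | d1 v == 1%N]| = #|[set v | d2 v == 1%N]|.
Proof.
move=> d1_le d2_le eq_poly.
have card0 : #|[set v | d1 v == 0%N]| = #|[set v | d2 v == 0%N]|.
  have := congr1 (horner^~ 0) eq_poly; rewrite !degree_poly_at0.
  by move/mulIf; rewrite signr_eq0 => /(_ isT) /eqP; rewrite eqr_nat => /eqP.
have := congr1 (fun p => p^`().[0]) eq_poly; rewrite !deriv_degree_poly_at0 // card0.
by move/mulIf; rewrite signr_eq0 => /(_ isT) /addIr /eqP; rewrite eqr_nat => /eqP.
Qed.

End DegreePolynomialComparison.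

Lemma nproper_ncolorings_with (T : finType) (e : rel T) k :
  nproper e k = ncolorings_with e (fun _ : {ffun 'I_k -> nat} => true).
Proof. by apply: eq_card => f; rewrite !inE andbT. Qed.

Lemma forest_nedges_eq (T1 T2 : finType) (e1 : rel T1) (e2 : rel T2) :
  forest e1 -> forest e2 -> #|T1| = #|T2| -> nproper e1 2 = nproper e2 2 ->
  nedges e1 = nedges e2.
Proof.
move=> e1_forest e2_forest card12 nproper12.
have := forest_nproper 2 e1_forest; have := forest_nproper 2 e2_forest.
rewrite !exp1n !muln1 -card12 -nproper12 => <- /eqP.
have nproper_gt0 : 0 < nproper e1 2.
  rewrite lt0n; apply/eqP => nproper0; have := forest_nproper 2 e1_forest.
  by rewrite nproper0 mul0n exp1n muln1 => /esym/eqP; rewrite expn_eq0.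
by rewrite eqn_pmul2l // eqn_exp2l // => /eqP.
Qed.

Theorem mainTheorem6 (T1 T2 : finType) (e1 : rel T1) (e2 : rel T2) :
  forest e1 -> forest e2 -> same_csf e1 e2 ->
  #|leaves e1| = #|leaves e2|.
Proof.
move=> e1_forest e2_forest same.
have [[e1_sym e1_irr] _] := e1_forest; have [[e2_sym e2_irr] _] := e2_forest.
have card12 := same_csf_card e1_irr same.
have nproper12 : nproper e1 2 = nproper e2 2.
  by rewrite !nproper_ncolorings_with (same_csf_ncolorings_with _ same).
have nedges12 := forest_nedges_eq e1_forest e2_forest card12 nproper12.
apply: (@degree_poly_card1 _ _ _ _ (nedges e1)) => [v|v|].
- exact: degree_le_nedges.
- by rewrite nedges12; apply: degree_le_nedges.
apply: degree_poly_eq => -[//|m] _; apply/eqP.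
rewrite -(eqn_pmul2l (expn_gt0 m.+1 #|T1|)) subn1 /= {2}card12 [in X in _ == X]nedges12.
by rewrite -!forest_ncolorings_zero_once // (same_csf_ncolorings_with _ same) nedges12.
Qed.
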